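(* Let $\tilde w:\mathcal D^n(\delta)\to\mathcal D^n(\delta)$ and let $C\subset\mathcal D^n(\delta)$ be nonempty and bounded with $\tilde w(C)\subset C$. Then the minimal absorbing set $\mathcal M[\tilde w,C]$ exists, i.e. the intersection of all absorbing sets for $\tilde w$ in $C$ is itself an absorbing set for $\tilde w$ in $C$.
   Context: $\mathcal D^n(\delta)=\{\delta m:m\in\mathbb Z^n\}\subset\mathbb R^n$ for fixed $\delta>0$. For a map $\tilde w$ and nonempty $C$ with $\tilde w(C)\subset C$, a set $\Lambda\subset C$ is an absorbing set for $\tilde w$ in $C$ if for every $\tilde x\in C$ there is $N\in\mathbb N$ with $\tilde w^{\circ i}(\tilde x)\in\Lambda$ for all $i\ge N$ (absorbing sets are nonempty). When the intersection of all absorbing sets in $C$ is absorbing in $C$, it is called the minimal absorbing set $\mathcal M[\tilde w,C]$. *)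

From mathcomp Require Import all_boot all_order all_algebra.
From mathcomp Require Import classical_sets reals.
Set Implicit Arguments. Unset Strict Implicit. Unset Printing Implicit Defensive.
Import Order.TTheory GRing.Theory Num.Theory.
Local Open Scope classical_set_scope.
Local Open Scope ring_scope.

Definition grid (R : realType) (n : nat) (delta : R) : set ('I_n -> R) :=
  [set x | exists m : 'I_n -> int, forall i, x i = delta * (m i)%:~R].

(* bounded subset of R^n (sup-norm bound; all norms equivalent) *)
Definition bounded_set (R : realType) (n : nat) (C : set ('I_n -> R)) : Prop :=
  exists M : R, forall x, C x -> forall i, `|x i| <= M.

Definition absorbing (T : Type) (w : T -> T) (C Lambda : set T) : Prop :=
  Lambda `<=` C /\ Lambda !=set0 /\
  forall x, C x -> exists N : nat, forall i : nat, (N <= i)%N -> Lambda (iter i w x).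

Definition absorbing_inter (T : Type) (w : T -> T) (C : set T) : set T :=
  [set x | forall Lambda, absorbing w C Lambda -> Lambda x].

(* An orbit of [w] in [C] is a sequence of grid points with bounded integer
   coordinates, so it takes only finitely many values and is eventually
   periodic.  A periodic point [y] of period [p] lies in every absorbing set
   [L]: [L] contains [w^i y] for all large [i], in particular
   [w^(N p) y = y].  Hence every orbit ends up in the intersection of all
   absorbing sets, which is therefore absorbing. *)
From mathcomp Require Import all_boot all_order all_algebra.
From mathcomp Require Import boolp classical_sets reals.
From mathcomp Require Import zify.
Set Implicit Arguments. Unset Strict Implicit. Unset Printing Implicit Defensive.
Import Order.TTheory GRing.Theory Num.Theory.
Local Open Scope classical_set_scope.
Local Open Scope ring_scope.

Lemma finType_seq_repeat (T : finType) (f : nat -> T) :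
  exists i j, (i < j)%N /\ f i = f j.
Proof.
apply: contrapT => no_repeat.
pose g (i : 'I_#|T|.+1) := f i.
have g_inj : injective g.
  move=> i j gij; apply/val_inj => /=.
  by case: (ltngtP i j) => // ltij; exfalso; apply: no_repeat;
    [exists i, j | exists j, i].
by have := leq_card g g_inj; rewrite card_ord ltnn.
Qed.

Lemma iter_periodic (T : Type) (w : T -> T) y p :
  iter p w y = y -> forall k, iter (k * p) w y = y.
Proof. by move=> yp; elim=> [|k IHk] //=; rewrite mulSn iterD IHk yp. Qed.

Section Absorbing.

Variables (T : Type) (w : T -> T) (C : set T).
Hypothesis wC : forall x, C x -> C (w x).

Definition eventually_periodic (x : T) : Prop :=
  exists N p, (0 < p)%N /\ iter (p + N) w x = iter N w x.

Lemma iter_stable k x : C x -> C (iter k w x).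
Proof. by elim: k => //= k IHk /IHk /wC. Qed.

Lemma absorbing_self : C !=set0 -> absorbing w C C.
Proof.
move=> C0; split=> //; split=> // x Cx.
by exists 0%N => i _; apply: iter_stable.
Qed.

Lemma absorbing_periodic L y p :
  absorbing w C L -> C y -> (0 < p)%N -> iter p w y = y -> L y.
Proof.
move=> [_ [_ absL]] Cy p_gt0 yp; have [N LN] := absL y Cy.
by rewrite -(iter_periodic yp N); apply: LN; rewrite leq_pmulr.
Qed.

Lemma eventually_periodic_tail x N p i : (N <= i)%N ->
  iter (p + N) w x = iter N w x -> iter p w (iter i w x) = iter i w x.
Proof.
move=> leNi xp.
by rewrite -iterD -(subnK leNi) addnCA iterD xp -iterD.
Qed.

Lemma finite_code_eventually_periodic (fT : finType) (f : T -> fT) :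
  (forall y z, C y -> C z -> f y = f z -> y = z) ->
  forall x, C x -> eventually_periodic x.
Proof.
move=> f_inj x Cx.
have [i [j [ltij fij]]] := finType_seq_repeat (fun k => f (iter k w x)).
exists i, (j - i)%N; rewrite subn_gt0 subnK ?(ltnW ltij) //; split=> //.
by apply/esym/f_inj => //; apply: iter_stable.
Qed.

Lemma absorbing_inter_absorbing : C !=set0 ->
  (forall x, C x -> eventually_periodic x) ->
  absorbing w C (absorbing_inter w C).
Proof.
move=> C0 per.
have tail_in x : C x -> exists N, forall i, (N <= i)%N ->
    absorbing_inter w C (iter i w x).
  move=> Cx; have [N [p [p_gt0 xp]]] := per x Cx.
  exists N => i leNi L absL.
  apply: (absorbing_periodic absL _ p_gt0); first exact: iter_stable.
  exact: eventually_periodic_tail leNi xp.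
split; first by move=> y; apply; apply: absorbing_self.
split=> //; have [x Cx] := C0; have [N inN] := tail_in x Cx.
by exists (iter N w x); apply: inN.
Qed.

End Absorbing.

Section BoundedGrid.

Variables (R : realType) (n : nat) (delta : R).
Hypothesis delta_gt0 : 0 < delta.

Definition grid_coord (x : 'I_n -> R) (i : 'I_n) : int := Num.floor (x i / delta).

Lemma grid_coordK x : grid delta x -> forall i, x i = delta * (grid_coord x i)%:~R.
Proof.
by move=> [m xm] i; rewrite /grid_coord xm mulrAC divff ?gt_eqF // mul1r intrKfloor.
Qed.

Lemma grid_coord_bounded (C : set ('I_n -> R)) :
  C `<=` grid delta -> bounded_set C ->
  exists K : nat, forall x, C x -> forall i, `|grid_coord x i| <= K%:Z.
Proof.
move=> Cgrid [M CM]; exists `|Num.ceil (M / delta)|%N => x Cx i.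
rewrite abszE; apply: le_trans (ler_norm _); rewrite -(ler_int R).
apply: le_trans (ceil_ge _).
rewrite ler_pdivlMr // mulrC intr_norm -(gtr0_norm delta_gt0) -normrM.
by rewrite -grid_coordK ?CM //; apply: Cgrid.
Qed.

Lemma bounded_grid_finite_code (C : set ('I_n -> R)) :
  C `<=` grid delta -> bounded_set C ->
  exists K (f : ('I_n -> R) -> {ffun 'I_n -> 'I_K}),
    forall y z, C y -> C z -> f y = f z -> y = z.
Proof.
move=> Cgrid Cb; have [K coordK] := grid_coord_bounded Cgrid Cb.
exists K.*2.+1, (fun y => [ffun i => inord (absz (grid_coord y i + K%:Z))]).
move=> y z Cy Cz /ffunP fyz; apply: funext => i.
move: (fyz i) (coordK y Cy i) (coordK z Cz i); rewrite !ffunE => fyzi ybd zbd.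
move/(congr1 (@nat_of_ord _)): fyzi; rewrite !inordK; [|lia|lia] => yzi.
rewrite (grid_coordK (Cgrid y Cy)) (grid_coordK (Cgrid z Cz)).
by congr (_ * _%:~R); lia.
Qed.

End BoundedGrid.

Theorem theorem3 (R : realType) (n : nat) (delta : R) (hdelta : 0 < delta)
    (w : ('I_n -> R) -> ('I_n -> R)) (C : set ('I_n -> R))
    (hw : forall x, grid delta x -> grid delta (w x))
    (hCgrid : C `<=` grid delta) (hC0 : C !=set0) (hCb : bounded_set C)
    (hwC : forall x, C x -> C (w x)) :
  absorbing w C (absorbing_inter w C).
Proof.
apply: absorbing_inter_absorbing => //.
have [K [f f_inj]] := bounded_grid_finite_code hdelta hCgrid hCb.
exact: finite_code_eventually_periodic f_inj.
Qed.
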